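(* Let $G\in\mathcal{G}$ and $x\in[v^{\min},v^{\max}]$. The function $\Psi_x(b)=G(b)(x-b)+\widehat G(b)$ on $[v^{\min},v^{\max}]$ (the agent's expected utility in Mechanism 2 from bidding $b$ when his value is $x$) attains its maximum at $b=x$, with maximum value $\widehat G(x)$. Consequently, in Mechanism 2 an agent who knows $v_a$ obtains optimal expected utility $E[\widehat G(v_a)]$ by bidding $v_a$, and an agent who knows only the prior obtains optimal utility $\widehat G(E[v_a])$ by bidding $E[v_a]$; and there exists $G\in\mathcal{G}$ with $E[\widehat G(v_a)]-\widehat G(E[v_a])>c$ if and only if $c<E[\max(0,v_a-E[v_a])]$, the point mass at $E[v_a]$ being such a $G$ in that case.
   Context: $\mathcal{G}$ is the set of cdfs of probability measures on $[v^{\min},v^{\max}]$, $0\le v^{\min}<v^{\max}$, and $\widehat G(b)=\int_{v^{\min}}^bG(r)\,dr$. The agent's value $v_a$ is a random variable supported in $[v^{\min},v^{\max}]$; he can learn it at cost $c\ge0$. Mechanism 2 (parameter $G$): the agent bids $b\in[v^{\min},v^{\max}]$; with probability $G(b)$ the agent buys the object at price $b-\widehat G(b)/G(b)$; otherwise nothing happens. The agent is risk-neutral with quasi-linear utility. *)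

From Stdlib Require Import Reals Lra ClassicalEpsilon.
Open Scope R_scope.

Definition is_cdf_on (vmin vmax : R) (G : R -> R) : Prop :=
  (forall x y, x <= y -> G x <= G y) /\
  (forall x, x < vmin -> G x = 0) /\
  (forall x, vmax <= x -> G x = 1) /\
  (forall x eps, 0 < eps -> exists delta, 0 < delta /\
      forall y, x <= y < x + delta -> Rabs (G y - G x) < eps).

(* Ghat(b) = \int_{vmin}^b G(r) dr (Riemann integral; the value is independent
   of the integrability proof chosen; 0 if not integrable, which never happens
   for a cdf). *)
Definition Ghat (vmin : R) (G : R -> R) (b : R) : R :=
  match excluded_middle_informative (inhabited (Riemann_integrable G vmin b)) with
  | left h => RiemannInt (epsilon h (fun _ => True))
  | right _ => 0
  end.

Definition Psi (vmin : R) (G : R -> R) (x b : R) : R :=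
  G b * (x - b) + Ghat vmin G b.

Definition point_mass_cdf (m : R) : R -> R :=
  fun r => if Rlt_dec r m then 0 else 1.

(* Expectation with respect to the law of v_a, a probability measure supported
   in [vmin, vmax], presented as an abstract integral: Integ is the class of
   integrable functions (containing all continuous functions, closed under
   linear combinations), E is linear, normalized and positive for functions
   nonnegative on [vmin, vmax]. *)
Definition is_expectation (vmin vmax : R) (Integ : (R -> R) -> Prop)
    (E : (R -> R) -> R) : Prop :=
  (forall f, continuity f -> Integ f) /\
  (forall f g, Integ f -> Integ g -> Integ (fun x => f x + g x)) /\
  (forall f r, Integ f -> Integ (fun x => r * f x)) /\
  (forall f g, Integ f -> Integ g -> E (fun x => f x + g x) = E f + E g) /\
  (forall f r, Integ f -> E (fun x => r * f x) = r * E f) /\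
  E (fun _ => 1) = 1 /\
  (forall f, Integ f -> (forall x, vmin <= x <= vmax -> 0 <= f x) -> 0 <= E f).

(* Since G is nondecreasing, Ghat(x) - Ghat(b) = \int_b^x G lies between
   G(b)(x - b) and G(x)(x - b); the lower bound for b <= x and the upper bound
   for x <= b both say exactly Psi_x(b) <= Ghat(x) = Psi_x(x).  Psi_x(b) is
   affine in x, so the expectation of Psi_v(b) is Psi_{E v}(b), and the two
   optimality claims follow.  As 0 <= G <= 1, Ghat is nondecreasing and
   1-Lipschitz, whence Ghat(v) <= Ghat(m) + max(0, v - m) for every m: the
   information gain E[Ghat(v)] - Ghat(E v) never exceeds E[max(0, v - E v)],
   and the point mass at E v, whose Ghat is b |-> max(0, b - E v), attains
   this bound. *)
From Stdlib Require Import Reals Lra Lia ClassicalEpsilon FunctionalExtensionality.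
Open Scope R_scope.

(** * Riemann integrability of monotone functions *)

Lemma IsStepFun_eq_interior (f g : R -> R) (a b : R) : a <= b ->
  (forall x, a < x < b -> f x = g x) -> IsStepFun f a b -> IsStepFun g a b.
Proof.
  intros Hab Hfg [l [lf (Hsorted & Hfirst & Hlast & Hlen & Hconst)]].
  rewrite Rmin_left in Hfirst by exact Hab; rewrite Rmax_right in Hlast by exact Hab.
  exists l, lf; unfold adapted_couple.
  rewrite Rmin_left, Rmax_right by exact Hab.
  repeat split; auto.
  intros i Hi x Hx; rewrite <- (Hconst i Hi x Hx); symmetry; apply Hfg.
  destruct (RList.RList_P6 l) as [Hmono _]; specialize (Hmono Hsorted).
  destruct Hx as [Hx1 Hx2]; split.
  - apply Rle_lt_trans with (RList.pos_Rl l i); [rewrite <- Hfirst; apply Hmono; lia | exact Hx1].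
  - apply Rlt_le_trans with (RList.pos_Rl l (S i)); [exact Hx2 | rewrite <- Hlast; apply Hmono; lia].
Qed.

(* The data required by [Riemann_integrable f a b] for one tolerance [d]. *)
Definition StepApprox (f : R -> R) (a b d : R) : Type :=
  {phi : StepFun a b & {psi : StepFun a b |
    (forall t, Rmin a b <= t <= Rmax a b -> Rabs (f t - phi t) <= psi t) /\
    Rabs (RiemannInt_SF psi) <= d}}.

Lemma StepApprox_weaken f a b d d' : d <= d' -> StepApprox f a b d -> StepApprox f a b d'.
Proof. intros Hd [phi [psi [Happrox Hint]]]; exists phi, psi; split; [exact Happrox | lra]. Qed.

Lemma StepApprox_concat f a b c d1 d2 : a <= b -> b <= c ->
  StepApprox f a b d1 -> StepApprox f b c d2 -> StepApprox f a c (d1 + d2).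
Proof.
  intros Hab Hbc [phi1 [psi1 [H1 J1]]] [phi2 [psi2 [H2 J2]]].
  set (phi := fun x => if Rle_dec x b then phi1 x else phi2 x).
  set (psi := fun x => if Rle_dec x b then psi1 x else psi2 x).
  assert (Pab : IsStepFun phi a b).
  { apply (IsStepFun_eq_interior phi1); [exact Hab| |apply pre].
    intros x Hx; unfold phi; destruct (Rle_dec x b); [reflexivity | lra]. }
  assert (Pbc : IsStepFun phi b c).
  { apply (IsStepFun_eq_interior phi2); [exact Hbc| |apply pre].
    intros x Hx; unfold phi; destruct (Rle_dec x b); [lra | reflexivity]. }
  assert (Qab : IsStepFun psi a b).
  { apply (IsStepFun_eq_interior psi1); [exact Hab| |apply pre].
    intros x Hx; unfold psi; destruct (Rle_dec x b); [reflexivity | lra]. }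
  assert (Qbc : IsStepFun psi b c).
  { apply (IsStepFun_eq_interior psi2); [exact Hbc| |apply pre].
    intros x Hx; unfold psi; destruct (Rle_dec x b); [lra | reflexivity]. }
  pose (Qac := StepFun_P46 Qab Qbc).
  exists (mkStepFun (StepFun_P46 Pab Pbc)), (mkStepFun Qac); split.
  - intros t Ht; rewrite Rmin_left, Rmax_right in Ht by lra.
    simpl; unfold phi, psi; destruct (Rle_dec t b).
    + apply H1; rewrite Rmin_left, Rmax_right; lra.
    + apply H2; rewrite Rmin_left, Rmax_right; lra.
  - simpl; rewrite <- (StepFun_P43 Qab Qbc Qac).
    assert (Int_ab : RiemannInt_SF (mkStepFun Qab) = RiemannInt_SF psi1).
    { apply Rle_antisym; apply StepFun_P37; auto;
        intros x Hx; simpl; unfold psi; destruct (Rle_dec x b); lra. }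
    assert (Int_bc : RiemannInt_SF (mkStepFun Qbc) = RiemannInt_SF psi2).
    { apply Rle_antisym; apply StepFun_P37; auto;
        intros x Hx; simpl; unfold psi; destruct (Rle_dec x b); lra. }
    rewrite Int_ab, Int_bc; eapply Rle_trans; [apply Rabs_triang | lra].
Qed.

Section Nondecreasing.
Variable f : R -> R.
Hypothesis f_nondecr : forall x y, x <= y -> f x <= f y.

Lemma StepApprox_nondecreasing a b : a <= b -> StepApprox f a b ((b - a) * (f b - f a)).
Proof.
  intros Hab.
  exists (mkStepFun (StepFun_P4 a b (f a))), (mkStepFun (StepFun_P4 a b (f b - f a))); split.
  - intros t Ht; rewrite Rmin_left, Rmax_right in Ht by lra.
    simpl; unfold fct_cte.
    pose proof (f_nondecr a t (proj1 Ht)); pose proof (f_nondecr t b (proj2 Ht)).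
    rewrite Rabs_right; lra.
  - rewrite StepFun_P18; pose proof (f_nondecr a b Hab).
    rewrite Rabs_right; nra.
Qed.

(* Cutting [a, a + n h] into [n] pieces of length [h], the errors telescope. *)
Lemma StepApprox_nondecreasing_grid n a h : 0 <= h ->
  StepApprox f a (a + INR n * h) (h * (f (a + INR n * h) - f a)).
Proof.
  intros Hh; induction n as [|n IH].
  - simpl; replace (a + 0 * h) with a by ring.
    eapply StepApprox_weaken; [|apply (StepApprox_nondecreasing a a (Rle_refl a))]; lra.
  - rewrite S_INR; replace (a + (INR n + 1) * h) with (a + INR n * h + h) by ring.
    pose proof (pos_INR n).
    eapply StepApprox_weaken;
      [|apply (StepApprox_concat f a (a + INR n * h)); [nra | lra | exact IH |]].
    2: apply StepApprox_nondecreasing; lra.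
    replace (a + INR n * h + h - (a + INR n * h)) with h by ring; lra.
Qed.

Lemma Riemann_integrable_nondecreasing_ordered a b : a <= b -> Riemann_integrable f a b.
Proof.
  intros Hab eps.
  set (K := (b - a) * (f b - f a)).
  assert (HK : 0 <= K) by (unfold K; pose proof (f_nondecr a b Hab); nra).
  pose proof (cond_pos eps) as Heps.
  set (t := eps / (K + 1)).
  assert (Ht : t * (K + 1) = eps) by (unfold t; field; lra).
  assert (Htpos : 0 < t) by (unfold t; apply Rdiv_lt_0_compat; lra).
  destruct (constructive_indefinite_description _ (archimed_cor1 _ Htpos)) as [N [HN HNpos]].
  assert (HNpos' : 0 < INR N) by (apply lt_0_INR; exact HNpos).
  set (h := (b - a) / INR N).
  assert (Hh : 0 <= h) by (unfold h; apply Rmult_le_pos; [lra | left; apply Rinv_0_lt_compat; lra]).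
  assert (Hend : a + INR N * h = b) by (unfold h; field; lra).
  pose proof (StepApprox_nondecreasing_grid N a h Hh) as Happrox; rewrite Hend in Happrox.
  destruct Happrox as [phi [psi [Happrox Hint]]]; exists phi, psi; split; [exact Happrox|].
  assert (Herr : h * (f b - f a) = K * / INR N) by (unfold h, K; field; lra).
  assert (K * / INR N <= K * t) by (apply Rmult_le_compat_l; lra).
  nra.
Qed.

Lemma Riemann_integrable_nondecreasing a b : Riemann_integrable f a b.
Proof.
  destruct (Rle_dec a b).
  - apply Riemann_integrable_nondecreasing_ordered; assumption.
  - apply RiemannInt_P1, Riemann_integrable_nondecreasing_ordered; lra.
Qed.

End Nondecreasing.

Lemma lipschitz_continuity (f : R -> R) (L : R) : 0 <= L ->
  (forall x y, Rabs (f x - f y) <= L * Rabs (x - y)) -> continuity f.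
Proof.
  intros HL Hf x eps Heps; exists (eps / (L + 1)); split.
  - apply Rdiv_lt_0_compat; lra.
  - intros y [_ Hy]; simpl in *; unfold R_dist in *.
    eapply Rle_lt_trans; [apply Hf|].
    pose proof (Rabs_pos (y - x)).
    apply (Rmult_lt_compat_l (L + 1)) in Hy; [|lra].
    replace ((L + 1) * (eps / (L + 1))) with eps in Hy by (field; lra).
    nra.
Qed.

Lemma Rmax_0_sub_continuity (m : R) : continuity (fun v => Rmax 0 (v - m)).
Proof.
  apply (lipschitz_continuity _ 1); [lra|]; intros x y.
  unfold Rmax; destruct (Rle_dec 0 (x - m)), (Rle_dec 0 (y - m));
    unfold Rabs; repeat destruct Rcase_abs; lra.
Qed.

(** * The integrated cdf *)

Section Ghat.
Variables (vmin : R) (G : R -> R).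
Hypothesis G_nondecr : forall x y, x <= y -> G x <= G y.

Let G_integrable a b := Riemann_integrable_nondecreasing G G_nondecr a b.

Lemma Ghat_RiemannInt b (pr : Riemann_integrable G vmin b) : Ghat vmin G b = RiemannInt pr.
Proof.
  unfold Ghat; destruct excluded_middle_informative as [h | hn].
  - apply RiemannInt_P5.
  - exfalso; apply hn; constructor; exact pr.
Qed.

Lemma Ghat_vmin : Ghat vmin G vmin = 0.
Proof. rewrite (Ghat_RiemannInt vmin (RiemannInt_P7 G vmin)); apply RiemannInt_P9. Qed.

Lemma Ghat_sub a b : Ghat vmin G b - Ghat vmin G a = RiemannInt (G_integrable a b).
Proof.
  rewrite (Ghat_RiemannInt b (G_integrable vmin b)), (Ghat_RiemannInt a (G_integrable vmin a)).
  rewrite <- (RiemannInt_P26 (G_integrable vmin a) (G_integrable a b) (G_integrable vmin b)).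
  ring.
Qed.

Lemma Ghat_sub_const_bound a b l u : a <= b -> (forall x, a < x < b -> l <= G x <= u) ->
  l * (b - a) <= Ghat vmin G b - Ghat vmin G a <= u * (b - a).
Proof. intros Hab Hlu; rewrite Ghat_sub; apply RiemannInt_const_bound; assumption. Qed.

Lemma Ghat_sub_bound a b : a <= b ->
  G a * (b - a) <= Ghat vmin G b - Ghat vmin G a <= G b * (b - a).
Proof. intros Hab; apply Ghat_sub_const_bound; [exact Hab|]; intros x Hx; split; apply G_nondecr; lra. Qed.

Lemma Psi_diag x : Psi vmin G x x = Ghat vmin G x.
Proof. unfold Psi; ring. Qed.

Lemma Psi_le_diag x b : Psi vmin G x b <= Psi vmin G x x.
Proof.
  unfold Psi; destruct (Rle_dec b x).
  - pose proof (Ghat_sub_bound b x r); lra.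
  - pose proof (Ghat_sub_bound x b (Rlt_le _ _ (Rnot_le_lt _ _ n))); nra.
Qed.

Hypothesis G_range : forall x, 0 <= G x <= 1.

Lemma Ghat_sub_range a b : a <= b -> 0 <= Ghat vmin G b - Ghat vmin G a <= b - a.
Proof.
  intros Hab; pose proof (Ghat_sub_bound a b Hab); pose proof (G_range a); pose proof (G_range b).
  nra.
Qed.

Lemma Ghat_le_Rmax_0_sub m v : Ghat vmin G v <= Ghat vmin G m + Rmax 0 (v - m).
Proof.
  destruct (Rle_dec m v).
  - pose proof (Ghat_sub_range m v r); pose proof (Rmax_r 0 (v - m)); lra.
  - pose proof (Ghat_sub_range v m (Rlt_le _ _ (Rnot_le_lt _ _ n))); pose proof (Rmax_l 0 (v - m)); lra.
Qed.

Lemma Ghat_continuity : continuity (Ghat vmin G).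
Proof.
  apply (lipschitz_continuity _ 1); [lra|]; intros x y; rewrite Rmult_1_l.
  destruct (Rle_dec y x).
  - pose proof (Ghat_sub_range y x r); rewrite !Rabs_right; lra.
  - pose proof (Ghat_sub_range x y (Rlt_le _ _ (Rnot_le_lt _ _ n))).
    rewrite !Rabs_left1; lra.
Qed.

End Ghat.

Lemma cdf_nondecreasing vmin vmax G : is_cdf_on vmin vmax G -> forall x y, x <= y -> G x <= G y.
Proof. intros HG; apply HG. Qed.

Lemma cdf_range vmin vmax G : is_cdf_on vmin vmax G -> forall x, 0 <= G x <= 1.
Proof.
  intros (Hmono & Hbelow & Habove & _) x; split.
  - rewrite <- (Hbelow (Rmin x (vmin - 1))); [apply Hmono, Rmin_l|].
    apply Rle_lt_trans with (vmin - 1); [apply Rmin_r | lra].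
  - rewrite <- (Habove (Rmax x vmax)); [apply Hmono, Rmax_l | apply Rmax_r].
Qed.

Lemma point_mass_cdf_is_cdf vmin vmax m : vmin <= m <= vmax ->
  is_cdf_on vmin vmax (point_mass_cdf m).
Proof.
  intros Hm; unfold point_mass_cdf; repeat split.
  - intros x y Hxy; destruct (Rlt_dec x m), (Rlt_dec y m); lra.
  - intros x Hx; destruct (Rlt_dec x m); lra.
  - intros x Hx; destruct (Rlt_dec x m); lra.
  - intros x eps Heps; destruct (Rlt_dec x m).
    + exists (m - x); split; [lra|]; intros y Hy.
      destruct (Rlt_dec y m); [|lra]; rewrite Rminus_diag, Rabs_R0; lra.
    + exists 1; split; [lra|]; intros y Hy.
      destruct (Rlt_dec y m); [lra|]; rewrite Rminus_diag, Rabs_R0; lra.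
Qed.

Lemma Ghat_point_mass_cdf vmin m : vmin <= m ->
  Ghat vmin (point_mass_cdf m) = fun b => Rmax 0 (b - m).
Proof.
  intros Hm; apply functional_extensionality; intros b.
  assert (Hnondecr : forall x y, x <= y -> point_mass_cdf m x <= point_mass_cdf m y).
  { intros x y Hxy; unfold point_mass_cdf; destruct (Rlt_dec x m), (Rlt_dec y m); lra. }
  assert (Hflat : forall a, a <= m -> Ghat vmin (point_mass_cdf m) m - Ghat vmin (point_mass_cdf m) a = 0).
  { intros a Ha; enough (0 * (m - a) <= Ghat vmin (point_mass_cdf m) m - Ghat vmin (point_mass_cdf m) a <= 0 * (m - a)) by lra.
    apply Ghat_sub_const_bound; [exact Hnondecr | exact Ha|].
    intros x Hx; unfold point_mass_cdf; destruct (Rlt_dec x m); lra. }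
  pose proof (Hflat vmin Hm) as Hm0; rewrite Ghat_vmin in Hm0.
  destruct (Rle_dec m b) as [Hmb | Hbm].
  - rewrite Rmax_right by lra.
    enough (1 * (b - m) <= Ghat vmin (point_mass_cdf m) b - Ghat vmin (point_mass_cdf m) m <= 1 * (b - m)) by lra.
    apply Ghat_sub_const_bound; [exact Hnondecr | exact Hmb|]; intros x Hx; unfold point_mass_cdf; destruct (Rlt_dec x m); lra.
  - rewrite Rmax_left by lra; pose proof (Hflat b (Rlt_le _ _ (Rnot_le_lt _ _ Hbm))); lra.
Qed.

(** * Expectations *)

Section Expectation.
Variables (vmin vmax : R) (Integ : (R -> R) -> Prop) (E : (R -> R) -> R).
Hypothesis HE : is_expectation vmin vmax Integ E.

Lemma Integ_continuity f : continuity f -> Integ f.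
Proof. apply HE. Qed.

Lemma Integ_const k : Integ (fun _ => k).
Proof. apply Integ_continuity, continuity_const; intros ? ?; reflexivity. Qed.

Lemma Integ_id : Integ (fun v => v).
Proof. exact (Integ_continuity id (derivable_continuous id derivable_id)). Qed.

Lemma Integ_add_scal f g r : Integ f -> Integ g -> Integ (fun x => f x + r * g x).
Proof. destruct HE as (_ & Hadd & Hscal & _); intros; apply Hadd; auto. Qed.

Lemma E_add_scal f g r : Integ f -> Integ g ->
  E (fun x => f x + r * g x) = E f + r * E g.
Proof.
  destruct HE as (_ & _ & Hscal & Eadd & Escal & _); intros Hf Hg.
  rewrite (Eadd f (fun x => r * g x)), Escal; auto.
Qed.

Lemma E_const k : E (fun _ => k) = k.
Proof.
  destruct HE as (_ & _ & _ & _ & Escal & E1 & _).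
  replace (fun _ : R => k) with (fun _ : R => k * 1) by (apply functional_extensionality; intros; ring).
  rewrite Escal, E1 by apply Integ_const; ring.
Qed.

Lemma E_affine a k : E (fun v => k + a * v) = k + a * E (fun v => v).
Proof.
  rewrite E_add_scal, E_const; [reflexivity | apply Integ_const | apply Integ_id].
Qed.

Lemma E_le f g : Integ f -> Integ g -> (forall x, vmin <= x <= vmax -> f x <= g x) -> E f <= E g.
Proof.
  intros Hf Hg Hfg; destruct HE as (_ & _ & _ & _ & _ & _ & Epos).
  enough (0 <= E (fun x => g x + -1 * f x)) by (rewrite E_add_scal in *; auto; lra).
  apply Epos; [apply Integ_add_scal; auto|]; intros x Hx; specialize (Hfg x Hx); lra.
Qed.

Lemma E_id_range : vmin <= E (fun v => v) <= vmax.
Proof.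
  split.
  - rewrite <- (E_const vmin) at 1; apply E_le; [apply Integ_const | apply Integ_id | intros; lra].
  - rewrite <- (E_const vmax); apply E_le; [apply Integ_id | apply Integ_const | intros; lra].
Qed.

Lemma E_Psi vG b : forall G : R -> R,
  E (fun v => Psi vG G v b) = Psi vG G (E (fun v => v)) b.
Proof.
  intros G; unfold Psi.
  replace (fun v => G b * (v - b) + Ghat vG G b)
    with (fun v => (Ghat vG G b - G b * b) + G b * v) by (apply functional_extensionality; intros; ring).
  rewrite E_affine; ring.
Qed.

Lemma E_Ghat_sub_le G m : is_cdf_on vmin vmax G ->
  E (Ghat vmin G) - Ghat vmin G m <= E (fun v => Rmax 0 (v - m)).
Proof.
  intros HG.
  pose proof (cdf_nondecreasing _ _ _ HG) as Hmono; pose proof (cdf_range _ _ _ HG) as Hrange.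
  assert (Hmax : Integ (fun v => Rmax 0 (v - m))) by apply Integ_continuity, Rmax_0_sub_continuity.
  pose proof (Integ_const (Ghat vmin G m)) as Hcst.
  enough (E (Ghat vmin G) <= E (fun v => Rmax 0 (v - m) + 1 * Ghat vmin G m))
    by (rewrite E_add_scal, E_const in *; auto; lra).
  apply E_le; [apply Integ_continuity, Ghat_continuity; auto | apply Integ_add_scal; auto |].
  intros x _; pose proof (Ghat_le_Rmax_0_sub vmin G Hmono Hrange m x); lra.
Qed.

End Expectation.

Theorem mainTheorem7 (vmin vmax c : R) (Integ : (R -> R) -> Prop)
    (E : (R -> R) -> R) :
  0 <= vmin -> vmin < vmax -> 0 <= c ->
  is_expectation vmin vmax Integ E ->
  (forall G, is_cdf_on vmin vmax G ->
     (forall x, vmin <= x <= vmax ->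
        (forall b, vmin <= b <= vmax -> Psi vmin G x b <= Psi vmin G x x) /\
        Psi vmin G x x = Ghat vmin G x) /\
     (forall beta : R -> R,
        (forall v, vmin <= v <= vmax -> vmin <= beta v <= vmax) ->
        Integ (fun v => Psi vmin G v (beta v)) ->
        E (fun v => Psi vmin G v (beta v)) <= E (Ghat vmin G)) /\
     E (fun v => Psi vmin G v v) = E (Ghat vmin G) /\
     vmin <= E (fun v => v) <= vmax /\
     (forall b, vmin <= b <= vmax ->
        E (fun v => Psi vmin G v b) <= Ghat vmin G (E (fun v => v))) /\
     E (fun v => Psi vmin G v (E (fun v => v))) = Ghat vmin G (E (fun v => v))) /\
  ((exists G, is_cdf_on vmin vmax G /\
      E (Ghat vmin G) - Ghat vmin G (E (fun v => v)) > c)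
   <-> c < E (fun v => Rmax 0 (v - E (fun w => w)))) /\
  (c < E (fun v => Rmax 0 (v - E (fun w => w))) ->
     is_cdf_on vmin vmax (point_mass_cdf (E (fun v => v))) /\
     E (Ghat vmin (point_mass_cdf (E (fun v => v))))
       - Ghat vmin (point_mass_cdf (E (fun v => v))) (E (fun v => v)) > c).
Proof.
  intros _ _ _ HE.
  pose proof (E_id_range vmin vmax Integ E HE) as Hmean.
  set (m := E (fun v => v)) in *.
  assert (Hpoint_mass : c < E (fun v => Rmax 0 (v - m)) ->
     is_cdf_on vmin vmax (point_mass_cdf m) /\
     E (Ghat vmin (point_mass_cdf m)) - Ghat vmin (point_mass_cdf m) m > c).
  { intros Hc; split; [apply point_mass_cdf_is_cdf; exact Hmean|].
    rewrite Ghat_point_mass_cdf by apply Hmean.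
    rewrite Rminus_diag, Rmax_left by lra; lra. }
  split; [|split; [split|exact Hpoint_mass]].
  - intros G HG.
    pose proof (cdf_nondecreasing _ _ _ HG) as Hmono.
    assert (Hdiag : (fun v => Psi vmin G v v) = Ghat vmin G)
      by (apply functional_extensionality; apply Psi_diag).
    split; [|split; [|split; [|split; [exact Hmean|split]]]].
    + intros x _; split; [intros b _; apply (Psi_le_diag vmin G Hmono) | apply Psi_diag].
    + intros beta _ Hbeta; apply (E_le vmin vmax Integ E HE); [exact Hbeta| |].
      * exact (Integ_continuity _ _ _ _ HE _ (Ghat_continuity vmin G Hmono (cdf_range _ _ _ HG))).
      * intros v _; rewrite <- Psi_diag; apply (Psi_le_diag vmin G Hmono).
    + rewrite Hdiag; reflexivity.
    + intros b _; rewrite (E_Psi vmin vmax Integ E HE), <- Psi_diag; apply (Psi_le_diag vmin G Hmono).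
    + rewrite (E_Psi vmin vmax Integ E HE); apply Psi_diag.
  - intros [G [HG Hgap]]; pose proof (E_Ghat_sub_le vmin vmax Integ E HE G m HG); lra.
  - intros Hc; exists (point_mass_cdf m); apply Hpoint_mass, Hc.
Qed.
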